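(* Let $V$ be a commutative unital quantale whose underlying lattice is a frame. The forgetful functor $\mathsf{U}_1\colon\mathsf{VGrp}\to\mathsf{Grp}$ (forgetting the $V$-category structure) is topological, and the forgetful functor $\mathsf{U}_2\colon\mathsf{VGrp}\to\mathsf{VCat}$ (forgetting the group structure) is monadic.
   Context: A commutative unital quantale $V$ is a complete lattice with a commutative associative operation $\otimes$ with unit $k$ preserving arbitrary joins in each variable; standing assumption: as a lattice $V$ is a frame. A $V$-category $(X,a)$ is a set with $a\colon X\times X\to V$ such that $k\le a(x,x)$ and $a(x,x')\otimes a(x',x'')\le a(x,x'')$; a $V$-functor $f\colon(X,a)\to(Y,b)$ satisfies $a(x,x')\le b(f(x),f(x'))$; category $\mathsf{VCat}$. A $V$-group $(X,a,+)$ is a $V$-category with a group structure (additive, not necessarily abelian) such that $a(x_1,x_2)\otimes a(x_1',x_2')\le a(x_1+x_1',x_2+x_2')$; $V$-homomorphisms are group homomorphisms that are $V$-functors; category $\mathsf{VGrp}$. A faithful functor $U\colon\mathcal A\to\mathcal X$ is topological if every $U$-structured source $(f_i\colon X\to UA_i)_{i\in I}$ has a unique $U$-initial lift. *)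

Set Implicit Arguments.
Unset Strict Implicit.

Record quantale := Quantale {
  q_car :> Type;
  q_le : q_car -> q_car -> Prop;
  q_le_refl : forall a, q_le a a;
  q_le_trans : forall a b c, q_le a b -> q_le b c -> q_le a c;
  q_le_antisym : forall a b, q_le a b -> q_le b a -> a = b;
  q_sup : (q_car -> Prop) -> q_car;
  q_sup_ub : forall (S : q_car -> Prop) a, S a -> q_le a (q_sup S);
  q_sup_least : forall (S : q_car -> Prop) b,
      (forall a, S a -> q_le a b) -> q_le (q_sup S) b;
  q_ten : q_car -> q_car -> q_car;
  q_k : q_car;
  q_ten_assoc : forall a b c, q_ten a (q_ten b c) = q_ten (q_ten a b) c;
  q_ten_comm : forall a b, q_ten a b = q_ten b a;
  q_ten_unit : forall a, q_ten q_k a = a;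
  q_ten_sup_r : forall a (S : q_car -> Prop),
      q_ten a (q_sup S) = q_sup (fun y => exists x, S x /\ y = q_ten a x);
  q_ten_sup_l : forall a (S : q_car -> Prop),
      q_ten (q_sup S) a = q_sup (fun y => exists x, S x /\ y = q_ten x a)
}.

Arguments q_le {q}.
Arguments q_sup {q}.
Arguments q_ten {q}.
Arguments q_k {q}.

Definition q_meet (V : quantale) (a b : V) : V :=
  q_sup (fun c => q_le c a /\ q_le c b).

Definition is_frame (V : quantale) : Prop :=
  forall (a : V) (S : V -> Prop),
    q_meet a (q_sup S) = q_sup (fun y => exists x, S x /\ y = q_meet a x).

Record grp := Grp {
  g_car :> Type;
  g_add : g_car -> g_car -> g_car;
  g_zero : g_car;
  g_neg : g_car -> g_car;
  g_assoc : forall x y z, g_add x (g_add y z) = g_add (g_add x y) z;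
  g_zero_l : forall x, g_add g_zero x = x;
  g_zero_r : forall x, g_add x g_zero = x;
  g_neg_l : forall x, g_add (g_neg x) x = g_zero;
  g_neg_r : forall x, g_add x (g_neg x) = g_zero
}.

Arguments g_add {g}.
Arguments g_zero {g}.
Arguments g_neg {g}.

Definition grp_hom (G H : grp) (f : G -> H) : Prop :=
  forall x y, f (g_add x y) = g_add (f x) (f y).

Section VStructures.
Variable V : quantale.

Definition is_vcat_str (X : Type) (a : X -> X -> V) : Prop :=
  (forall x, q_le q_k (a x x)) /\
  (forall x x' x'', q_le (q_ten (a x x') (a x' x'')) (a x x'')).

Record vcat := VCat {
  vc_car :> Type;
  vc_hom : vc_car -> vc_car -> V;
  vc_ax : is_vcat_str vc_hom
}.

Definition vfun (X Y : vcat) (f : X -> Y) : Prop :=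
  forall x x', q_le (vc_hom x x') (vc_hom (f x) (f x')).

Definition is_vgrp_str (G : grp) (a : G -> G -> V) : Prop :=
  is_vcat_str a /\
  (forall x1 x2 y1 y2,
      q_le (q_ten (a x1 x2) (a y1 y2)) (a (g_add x1 y1) (g_add x2 y2))).

Record vgrp := VGrp {
  vg_grp : grp;
  vg_hom : vg_grp -> vg_grp -> V;
  vg_ax : is_vgrp_str vg_hom
}.

Definition U1 (A : vgrp) : grp := vg_grp A.

Definition U2 (A : vgrp) : vcat :=
  @VCat (g_car (vg_grp A)) (@vg_hom A) (proj1 (vg_ax A)).

Definition vhom (A B : vgrp) (f : vg_grp A -> vg_grp B) : Prop :=
  grp_hom f /\ vfun (X := U2 A) (Y := U2 B) f.

Definition is_initial_lift (G : grp) (I : Type) (A : I -> vgrp)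
    (f : forall i, G -> vg_grp (A i)) (a : G -> G -> V) (Ha : is_vgrp_str a) : Prop :=
  let L := @VGrp G a Ha in
  (forall i, vhom (A := L) (B := A i) (f i)) /\
  (forall (B : vgrp) (g : vg_grp B -> G), grp_hom g ->
     (forall i, vhom (A := B) (B := A i) (fun y => f i (g y))) ->
     vhom (A := B) (B := L) g).

Definition U1_topological : Prop :=
  forall (G : grp) (I : Type) (A : I -> vgrp) (f : forall i, G -> vg_grp (A i)),
    (forall i, grp_hom (f i)) ->
    exists (a : G -> G -> V) (Ha : is_vgrp_str a),
      is_initial_lift f Ha /\
      (forall (a' : G -> G -> V) (Ha' : is_vgrp_str a'),
          is_initial_lift f Ha' -> forall x y, a' x y = a x y).

(* A left adjoint to U2 given by universal arrows:
   Fo X is the free V-group on X, eta X : X -> U2 (Fo X) the unit, and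
   ext X B f : Fo X -> B the unique V-homomorphism extending f along eta. *)
Section Monadic.
Variable Fo : vcat -> vgrp.
Variable eta : forall X : vcat, X -> vg_grp (Fo X).
Variable ext : forall (X : vcat) (B : vgrp), (X -> vg_grp B) -> vg_grp (Fo X) -> vg_grp B.

Definition left_adjoint_spec : Prop :=
  (forall X : vcat, vfun (X := X) (Y := U2 (Fo X)) (@eta X)) /\
  (forall (X : vcat) (B : vgrp) (f : X -> vg_grp B),
     vfun (X := X) (Y := U2 B) f ->
     vhom (A := Fo X) (B := B) (ext f) /\
     (forall x, ext f (eta x) = f x) /\
     (forall g : vg_grp (Fo X) -> vg_grp B,
        vhom (A := Fo X) (B := B) g -> (forall x, g (eta x) = f x) ->
        forall y, g y = ext f y)).

Definition T (X : vcat) : vcat := U2 (Fo X).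
Definition Tmap (X Y : vcat) (h : X -> Y) : T X -> T Y :=
  ext (X := X) (B := Fo Y) (fun x => eta (h x)).
Definition counit (B : vgrp) : vg_grp (Fo (U2 B)) -> vg_grp B :=
  ext (X := U2 B) (B := B) (fun y => y).
Definition mu (X : vcat) : T (T X) -> T X := @counit (Fo X).

Definition is_algebra (X : vcat) (xi : T X -> X) : Prop :=
  vfun (X := T X) (Y := X) xi /\
  (forall x, xi (eta x) = x) /\
  (forall t : T (T X), xi (Tmap xi t) = xi (mu t)).

Definition is_alg_morph (X Y : vcat) (xi : T X -> X) (zeta : T Y -> Y) (h : X -> Y) : Prop :=
  vfun h /\ forall t : T X, h (xi t) = zeta (Tmap h t).

(* Comparison functor K : VGrp -> VCat^T, K B = (U2 B, U2 epsilon_B), identity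
   on underlying maps (hence automatically faithful). K is an equivalence iff it
   is full and essentially surjective. *)
Definition comparison_equivalence : Prop :=
  (forall (A B : vgrp) (h : vg_grp A -> vg_grp B),
     is_alg_morph (X := U2 A) (Y := U2 B) (@counit A) (@counit B) h ->
     vhom (A := A) (B := B) h) /\
  (forall (X : vcat) (xi : T X -> X), is_algebra xi ->
     exists (B : vgrp) (h : X -> vg_grp B) (g : vg_grp B -> X),
       is_alg_morph (X := X) (Y := U2 B) xi (@counit B) h /\
       is_alg_morph (X := U2 B) (Y := X) (@counit B) xi g /\
       (forall x, g (h x) = x) /\ (forall y, h (g y) = y)).
End Monadic.

Definition U2_monadic : Prop :=
  exists (Fo : vcat -> vgrp)
         (eta : forall X : vcat, X -> vg_grp (Fo X))
         (ext : forall (X : vcat) (B : vgrp), (X -> vg_grp B) -> vg_grp (Fo X) -> vg_grp B),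
    left_adjoint_spec eta ext /\ comparison_equivalence eta ext.

End VStructures.

(* V-group structures on a fixed group are closed under pointwise infima, since
   the tensor is monotone.  Hence the U1-initial structure for a source (f_i) is
   the infimum of the structures pulled back along the f_i, and the free V-group
   on a V-category X is the free group on X with the largest V-group structure
   making the generators a V-functor.  For monadicity, an Eilenberg-Moore
   algebra xi : T X -> X makes X a group via x + y = xi (eta x + eta y): the
   multiplication law gives xi (eta (xi u) + eta (xi v)) = xi (u + v), from which
   the group laws and the additivity of xi follow, and since xi is a V-functor
   this addition is compatible with the V-category structure of X. *)

From Stdlib Require Import List Bool RelationClasses ClassicalEpsilon PropExtensionality
  FunctionalExtensionality ProofIrrelevance.
Import ListNotations.

Set Implicit Arguments.
Unset Strict Implicit.

Section Quotient.
Context {A : Type} (R : A -> A -> Prop) `{Equivalence A R}.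

Definition quot : Type := {P : A -> Prop | exists a, P = R a}.

Definition qclass (a : A) : quot := exist _ (R a) (ex_intro _ a eq_refl).

Definition qrepr (p : quot) : A :=
  proj1_sig (constructive_indefinite_description _ (proj2_sig p)).

Lemma qclass_repr (p : quot) : qclass (qrepr p) = p.
Proof.
  unfold qrepr. destruct (constructive_indefinite_description _ _) as [a Ha]; simpl.
  destruct p as [P HP]; simpl in Ha; subst P.
  now apply subset_eq_compat.
Qed.

Lemma qclass_surjective (p : quot) : exists a, p = qclass a.
Proof. exists (qrepr p). now rewrite qclass_repr. Qed.

Lemma qclass_eq (a b : A) : R a b -> qclass a = qclass b.
Proof.
  intro Hab. apply subset_eq_compat.
  apply functional_extensionality; intro c.
  apply propositional_extensionality; split; intro Hc.
  - now transitivity a.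
  - now transitivity b.
Qed.

Lemma qclass_inj (a b : A) : qclass a = qclass b -> R a b.
Proof.
  intro E. apply (f_equal (@proj1_sig _ _)) in E; simpl in E.
  rewrite E. reflexivity.
Qed.

Lemma qrepr_class (a : A) : R (qrepr (qclass a)) a.
Proof. apply qclass_inj, qclass_repr. Qed.

End Quotient.

Arguments qclass_eq {A} R {_} [a b].
Arguments qrepr_class {A} R {_} a.

Lemma g_neg_unique (G : grp) (a b : G) : g_add a b = g_zero -> a = g_neg b.
Proof.
  intro E. rewrite <- (g_zero_r a), <- (g_neg_r b), g_assoc, E, g_zero_l.
  reflexivity.
Qed.

Section GroupHom.
Variables G H : grp.

Lemma grp_hom_zero (h : G -> H) : grp_hom h -> h g_zero = g_zero.
Proof.
  intro Hh. transitivity (g_add (g_neg (h g_zero)) (h (g_add g_zero g_zero))).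
  - now rewrite Hh, g_assoc, g_neg_l, g_zero_l.
  - rewrite g_zero_l. apply g_neg_l.
Qed.

Lemma grp_hom_neg (h : G -> H) (x : G) : grp_hom h -> h (g_neg x) = g_neg (h x).
Proof.
  intro Hh. apply g_neg_unique. rewrite <- Hh, g_neg_l. now apply grp_hom_zero.
Qed.

End GroupHom.

Section FreeGroup.
Variable X : Type.

(* A letter [(x, true)] stands for the generator [x], [(x, false)] for its inverse. *)
Definition word : Type := list (X * bool).

Inductive free_equiv : word -> word -> Prop :=
| free_equiv_refl w : free_equiv w w
| free_equiv_sym u v : free_equiv u v -> free_equiv v u
| free_equiv_trans u v w : free_equiv u v -> free_equiv v w -> free_equiv u w
| free_equiv_cancel u v x b :
    free_equiv (u ++ (x, b) :: (x, negb b) :: v) (u ++ v).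

Instance free_equiv_Equivalence : Equivalence free_equiv.
Proof.
  split; red; [apply free_equiv_refl | apply free_equiv_sym | apply free_equiv_trans].
Qed.

Lemma free_equiv_app_l (p u u' : word) : free_equiv u u' -> free_equiv (p ++ u) (p ++ u').
Proof.
  induction 1; try (econstructor; eassumption).
  rewrite !app_assoc. apply free_equiv_cancel.
Qed.

Lemma free_equiv_app_r (q u u' : word) : free_equiv u u' -> free_equiv (u ++ q) (u' ++ q).
Proof.
  induction 1; try (econstructor; eassumption).
  rewrite <- !app_assoc. apply free_equiv_cancel.
Qed.

Lemma free_equiv_app (u u' v v' : word) :
  free_equiv u u' -> free_equiv v v' -> free_equiv (u ++ v) (u' ++ v').
Proof.
  intros Hu Hv. transitivity (u' ++ v).
  - now apply free_equiv_app_r.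
  - now apply free_equiv_app_l.
Qed.

Definition letter_inv (l : X * bool) : X * bool := (fst l, negb (snd l)).
Definition word_inv (w : word) : word := rev (map letter_inv w).

Lemma free_equiv_inv (u v : word) : free_equiv u v -> free_equiv (word_inv u) (word_inv v).
Proof.
  unfold word_inv. induction 1; try (econstructor; eassumption).
  rewrite !map_app, !rev_app_distr; simpl. rewrite <- !app_assoc; simpl.
  unfold letter_inv at 1; simpl. rewrite <- (negb_involutive b) at 2.
  apply free_equiv_cancel.
Qed.

Lemma word_inv_app_l (w : word) : free_equiv (word_inv w ++ w) [].
Proof.
  unfold word_inv. induction w as [|[x b] w IH]; simpl; [reflexivity|].
  rewrite <- app_assoc; simpl. rewrite <- IH.
  pose proof (free_equiv_cancel (rev (map letter_inv w)) w x (negb b)) as E.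
  now rewrite negb_involutive in E.
Qed.

Lemma word_inv_involutive (w : word) : word_inv (word_inv w) = w.
Proof.
  unfold word_inv. rewrite map_rev, rev_involutive, map_map.
  induction w as [|[x b] w IH]; simpl; [reflexivity|].
  unfold letter_inv at 1; simpl. now rewrite negb_involutive, IH.
Qed.

Lemma word_inv_app_r (w : word) : free_equiv (w ++ word_inv w) [].
Proof.
  rewrite <- (word_inv_involutive w) at 1. apply word_inv_app_l.
Qed.

Definition free_carrier : Type := quot free_equiv.

Definition free_add (p q : free_carrier) : free_carrier :=
  qclass free_equiv (qrepr p ++ qrepr q).
Definition free_zero : free_carrier := qclass free_equiv [].
Definition free_neg (p : free_carrier) : free_carrier :=
  qclass free_equiv (word_inv (qrepr p)).

Lemma free_add_class (u v : word) :
  free_add (qclass free_equiv u) (qclass free_equiv v) = qclass free_equiv (u ++ v).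
Proof. apply (qclass_eq free_equiv), free_equiv_app; apply (qrepr_class free_equiv). Qed.

Lemma free_neg_class (u : word) :
  free_neg (qclass free_equiv u) = qclass free_equiv (word_inv u).
Proof. apply (qclass_eq free_equiv), free_equiv_inv, (qrepr_class free_equiv). Qed.

Lemma free_add_assoc (p q r : free_carrier) :
  free_add p (free_add q r) = free_add (free_add p q) r.
Proof.
  destruct (qclass_surjective p) as [u ->], (qclass_surjective q) as [v ->],
    (qclass_surjective r) as [w ->].
  now rewrite !free_add_class, app_assoc.
Qed.

Lemma free_zero_add (p : free_carrier) : free_add free_zero p = p.
Proof.
  destruct (qclass_surjective p) as [u ->]. unfold free_zero. now rewrite free_add_class.
Qed.

Lemma free_add_zero (p : free_carrier) : free_add p free_zero = p.
Proof.
  destruct (qclass_surjective p) as [u ->]. unfold free_zero.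
  now rewrite free_add_class, app_nil_r.
Qed.

Lemma free_neg_add (p : free_carrier) : free_add (free_neg p) p = free_zero.
Proof.
  destruct (qclass_surjective p) as [u ->].
  rewrite free_neg_class, free_add_class. apply (qclass_eq free_equiv), word_inv_app_l.
Qed.

Lemma free_add_neg (p : free_carrier) : free_add p (free_neg p) = free_zero.
Proof.
  destruct (qclass_surjective p) as [u ->].
  rewrite free_neg_class, free_add_class. apply (qclass_eq free_equiv), word_inv_app_r.
Qed.

Definition free_grp : grp :=
  Grp free_add_assoc free_zero_add free_add_zero free_neg_add free_add_neg.

Definition free_gen (x : X) : free_grp := qclass free_equiv [(x, true)].

Section FreeLift.
Variables (B : grp) (f : X -> B).

Definition letter_value (l : X * bool) : B :=
  if snd l then f (fst l) else g_neg (f (fst l)).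

Definition word_value (w : word) : B :=
  fold_right (fun l acc => g_add (letter_value l) acc) g_zero w.

Lemma word_value_app (u v : word) :
  word_value (u ++ v) = g_add (word_value u) (word_value v).
Proof.
  induction u as [|l u IH]; simpl.
  - now rewrite g_zero_l.
  - now rewrite IH, g_assoc.
Qed.

Lemma word_value_free_equiv (u v : word) : free_equiv u v -> word_value u = word_value v.
Proof.
  induction 1; try congruence.
  rewrite !word_value_app; simpl. rewrite (g_assoc (letter_value (x, b))).
  assert (Hcancel : g_add (letter_value (x, b)) (letter_value (x, negb b)) = g_zero)
    by (unfold letter_value; destruct b; [apply g_neg_r | apply g_neg_l]).
  now rewrite Hcancel, g_zero_l.
Qed.

Definition free_lift (p : free_grp) : B := word_value (qrepr p).

Lemma free_lift_class (w : word) : free_lift (qclass free_equiv w) = word_value w.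
Proof. apply word_value_free_equiv, (qrepr_class free_equiv). Qed.

Lemma free_lift_hom : grp_hom free_lift.
Proof.
  intros p q. unfold g_add at 1; simpl; unfold free_add.
  now rewrite free_lift_class, word_value_app.
Qed.

Lemma free_lift_gen (x : X) : free_lift (free_gen x) = f x.
Proof. unfold free_gen. rewrite free_lift_class. apply g_zero_r. Qed.

Lemma free_lift_unique (g : free_grp -> B) :
  grp_hom g -> (forall x, g (free_gen x) = f x) -> forall p, g p = free_lift p.
Proof.
  intros Hg Hgen p. destruct (qclass_surjective p) as [w ->].
  rewrite free_lift_class. induction w as [|[x b] w IH]; simpl.
  - exact (grp_hom_zero Hg).
  - change ((x, b) :: w) with ([(x, b)] ++ w). rewrite <- free_add_class.
    change (g (g_add (qclass free_equiv [(x, b)] : free_grp) (qclass free_equiv w))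
            = g_add (letter_value (x, b)) (word_value w)).
    rewrite Hg, IH. f_equal. unfold letter_value; destruct b; simpl.
    + apply Hgen.
    + rewrite <- Hgen, <- grp_hom_neg by exact Hg. f_equal.
      change (qclass free_equiv [(x, false)] = free_neg (free_gen x)).
      unfold free_gen. now rewrite free_neg_class.
Qed.

End FreeLift.
End FreeGroup.

Section VStructureLemmas.
Variable V : quantale.

Lemma q_ten_mono_l (a b c : V) : q_le a b -> q_le (q_ten a c) (q_ten b c).
Proof.
  intro Hab.
  assert (Hjoin : q_sup (fun y => y = a \/ y = b) = b).
  { apply q_le_antisym.
    - apply q_sup_least. intros y [-> | ->]; [exact Hab | apply q_le_refl].
    - apply q_sup_ub. now right. }
  rewrite <- Hjoin, q_ten_sup_l. apply q_sup_ub. exists a. now split; [left|].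
Qed.

Lemma q_ten_mono (a b c d : V) :
  q_le a b -> q_le c d -> q_le (q_ten a c) (q_ten b d).
Proof.
  intros Hab Hcd. apply q_le_trans with (q_ten b c).
  - now apply q_ten_mono_l.
  - rewrite !(q_ten_comm b). now apply q_ten_mono_l.
Qed.

Definition rel_inf (G I : Type) (c : I -> G -> G -> V) (x y : G) : V :=
  q_sup (fun t => forall i, q_le t (c i x y)).

Lemma rel_inf_lb (G I : Type) (c : I -> G -> G -> V) (i : I) (x y : G) :
  q_le (rel_inf c x y) (c i x y).
Proof. apply q_sup_least. intros t Ht. apply Ht. Qed.

Lemma rel_inf_glb (G I : Type) (c : I -> G -> G -> V) (t : V) (x y : G) :
  (forall i, q_le t (c i x y)) -> q_le t (rel_inf c x y).
Proof. intro Ht. now apply q_sup_ub. Qed.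

Lemma is_vgrp_str_inf (G : grp) (I : Type) (c : I -> G -> G -> V) :
  (forall i, is_vgrp_str (c i)) -> is_vgrp_str (rel_inf c).
Proof.
  intro Hc. split; [split|].
  - intro x. apply rel_inf_glb. intro i. apply (Hc i).
  - intros x y z. apply rel_inf_glb. intro i.
    eapply q_le_trans; [|apply (Hc i)]. apply q_ten_mono; apply rel_inf_lb.
  - intros x1 x2 y1 y2. apply rel_inf_glb. intro i.
    eapply q_le_trans; [|apply (Hc i)]. apply q_ten_mono; apply rel_inf_lb.
Qed.

Lemma is_vgrp_str_comap (G H : grp) (h : G -> H) (b : H -> H -> V) :
  grp_hom h -> is_vgrp_str b -> is_vgrp_str (fun x y => b (h x) (h y)).
Proof.
  intros Hh [[Hrefl Htrans] Hadd]. split; [split|].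
  - intro x. apply Hrefl.
  - intros x y z. apply Htrans.
  - intros x1 x2 y1 y2. rewrite !Hh. apply Hadd.
Qed.

Lemma vhom_comp (A B C : vgrp V) (g : vg_grp A -> vg_grp B) (h : vg_grp B -> vg_grp C) :
  vhom g -> vhom h -> vhom (fun x => h (g x)).
Proof.
  intros [Hg Hgv] [Hh Hhv]. split.
  - intros x y. rewrite Hg. apply Hh.
  - intros x y. eapply q_le_trans; [apply Hgv | apply Hhv].
Qed.

End VStructureLemmas.

Section InitialLift.
Variables (V : quantale) (G : grp) (I : Type) (A : I -> vgrp V)
  (f : forall i, G -> vg_grp (A i)).
Hypothesis f_hom : forall i, grp_hom (f i).

Definition initial_str : G -> G -> V :=
  rel_inf (fun i x y => vg_hom (f i x) (f i y)).

Lemma initial_str_vgrp : is_vgrp_str initial_str.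
Proof.
  apply is_vgrp_str_inf. intro i. apply is_vgrp_str_comap; [apply f_hom | apply vg_ax].
Qed.

Lemma initial_str_initial_lift : is_initial_lift f initial_str_vgrp.
Proof.
  split.
  - intro i. split; [apply f_hom|]. intros x y. exact (rel_inf_lb _ i x y).
  - intros B g g_hom Hg. split; [exact g_hom|]. intros x y. apply rel_inf_glb.
    intro i. apply (proj2 (Hg i)).
Qed.

Lemma initial_lift_unique (a : G -> G -> V) (Ha : is_vgrp_str a) :
  is_initial_lift f Ha -> forall x y, a x y = initial_str x y.
Proof.
  intros [Hf Hinit] x y. apply q_le_antisym.
  - apply rel_inf_glb. intro i. apply (proj2 (Hf i)).
  - assert (Hid : vhom (A := VGrp initial_str_vgrp) (B := VGrp Ha) (fun z => z)).
    { apply Hinit; [intros u v; reflexivity|].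
      apply (proj1 initial_str_initial_lift). }
    apply (proj2 Hid).
Qed.

End InitialLift.

Lemma U1_is_topological (V : quantale) : U1_topological V.
Proof.
  intros G I A f f_hom. exists (initial_str f), (initial_str_vgrp f_hom). split.
  - apply initial_str_initial_lift.
  - intros a Ha Hlift. exact (initial_lift_unique f_hom Hlift).
Qed.

Section FreeVGroup.
Variable V : quantale.

Definition free_admissible (X : vcat V) (c : free_grp X -> free_grp X -> V) : Prop :=
  is_vgrp_str c /\ forall x x' : X, q_le (vc_hom x x') (c (free_gen x) (free_gen x')).

Definition free_vgrp_str (X : vcat V) : free_grp X -> free_grp X -> V :=
  rel_inf (fun c : {c | free_admissible c} => proj1_sig c).

Lemma free_vgrp_str_vgrp (X : vcat V) : is_vgrp_str (@free_vgrp_str X).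
Proof. apply is_vgrp_str_inf. intros [c Hc]. apply Hc. Qed.

Definition free_vgrp (X : vcat V) : vgrp V := VGrp (free_vgrp_str_vgrp X).

Definition free_vgrp_unit (X : vcat V) : X -> vg_grp (free_vgrp X) := @free_gen X.

Definition free_vgrp_ext (X : vcat V) (B : vgrp V) (f : X -> vg_grp B) :
  vg_grp (free_vgrp X) -> vg_grp B := free_lift f.

Lemma free_vgrp_left_adjoint : left_adjoint_spec free_vgrp_unit free_vgrp_ext.
Proof.
  split.
  - intros X x x'. apply rel_inf_glb. intros [c Hc]. apply Hc.
  - intros X B f Hf. split; [|split].
    + split; [apply free_lift_hom|]. intros u v.
      refine (rel_inf_lb _ (exist _ (fun u v => vg_hom (free_lift f u) (free_lift f v)) _) u v).
      split.
      * apply is_vgrp_str_comap; [apply free_lift_hom | apply vg_ax].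
      * intros x x'. rewrite !free_lift_gen. apply Hf.
    + apply free_lift_gen.
    + intros g [g_hom _] Hg y. now apply free_lift_unique.
Qed.

End FreeVGroup.

Section Monadicity.
Variables (V : quantale) (Fo : vcat V -> vgrp V)
  (eta : forall X : vcat V, X -> vg_grp (Fo X))
  (ext : forall (X : vcat V) (B : vgrp V), (X -> vg_grp B) -> vg_grp (Fo X) -> vg_grp B).
Hypothesis adjunction : left_adjoint_spec eta ext.

Lemma unit_vfun (X : vcat V) : vfun (X := X) (Y := U2 (Fo X)) (@eta X).
Proof. apply adjunction. Qed.

Section Extension.
Variables (X : vcat V) (B : vgrp V) (f : X -> vg_grp B).
Hypothesis f_vfun : vfun (X := X) (Y := U2 B) f.

Lemma ext_vhom : vhom (A := Fo X) (B := B) (ext f).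
Proof. apply adjunction, f_vfun. Qed.

Lemma ext_unit (x : X) : ext f (eta x) = f x.
Proof. apply adjunction, f_vfun. Qed.

Lemma ext_unique (g : vg_grp (Fo X) -> vg_grp B) :
  vhom g -> (forall x, g (eta x) = f x) -> forall y, g y = ext f y.
Proof. apply adjunction, f_vfun. Qed.

End Extension.

Lemma vhom_eq_on_unit (X : vcat V) (B : vgrp V) (g h : vg_grp (Fo X) -> vg_grp B) :
  vhom g -> vhom h -> (forall x, g (eta x) = h (eta x)) -> forall y, g y = h y.
Proof.
  intros Hg Hh Hgh y.
  assert (Hhu : vfun (X := X) (Y := U2 B) (fun x => h (eta x))).
  { intros x x'. eapply q_le_trans; [apply unit_vfun | apply (proj2 Hh)]. }
  rewrite (ext_unique Hhu Hg Hgh). symmetry. now apply ext_unique.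
Qed.

Lemma id_vfun (B : vgrp V) : vfun (X := U2 B) (Y := U2 B) (fun y => y).
Proof. intros x x'. apply q_le_refl. Qed.

Lemma counit_vhom (B : vgrp V) : vhom (counit ext (B := B)).
Proof. exact (ext_vhom (@id_vfun B)). Qed.

Lemma counit_unit (B : vgrp V) (y : vg_grp B) : counit ext (eta (X := U2 B) y) = y.
Proof. apply (ext_unit (@id_vfun B)). Qed.

Section FunctorialAction.
Variables (X Y : vcat V) (h : X -> Y).
Hypothesis h_vfun : vfun h.

Lemma unit_comp_vfun : vfun (X := X) (Y := U2 (Fo Y)) (fun x => eta (h x)).
Proof. intros x x'. eapply q_le_trans; [apply h_vfun | apply unit_vfun]. Qed.

Lemma Tmap_vhom : vhom (A := Fo X) (B := Fo Y) (Tmap eta ext h).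
Proof. exact (ext_vhom unit_comp_vfun). Qed.

Lemma Tmap_unit (x : X) : Tmap eta ext h (eta x) = eta (h x).
Proof. exact (ext_unit unit_comp_vfun x). Qed.

End FunctorialAction.

(* The sum in a V-group [A] is recovered from its algebra structure as
   [counit (eta x + eta y)]. *)
Lemma comparison_full (A B : vgrp V) (h : vg_grp A -> vg_grp B) :
  is_alg_morph eta ext (counit ext (B := A)) (counit ext (B := B)) h -> vhom h.
Proof.
  intros [h_vfun h_morph]. split; [|exact h_vfun]. intros x y.
  rewrite <- (counit_unit x), <- (counit_unit y) at 1.
  rewrite <- (proj1 (counit_vhom A)), h_morph, (proj1 (Tmap_vhom h_vfun)),
    !(Tmap_unit h_vfun), (proj1 (counit_vhom B)), !counit_unit.
  reflexivity.
Qed.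

Section Algebra.
Variables (X : vcat V) (xi : T Fo X -> X).
Hypothesis xi_algebra : is_algebra eta ext xi.

Lemma xi_vfun : vfun xi.
Proof. apply xi_algebra. Qed.

Lemma xi_unit (x : X) : xi (eta x) = x.
Proof. apply xi_algebra. Qed.

Definition alg_add (x y : X) : X := xi (g_add (eta x) (eta y)).
Definition alg_zero : X := xi g_zero.
Definition alg_neg (x : X) : X := xi (g_neg (eta x)).

Lemma alg_add_xi (u v : vg_grp (Fo X)) : alg_add (xi u) (xi v) = xi (g_add u v).
Proof.
  pose proof (proj2 (proj2 xi_algebra) (g_add (eta (X := T Fo X) u) (eta (X := T Fo X) v))) as Hmul.
  rewrite (proj1 (Tmap_vhom xi_vfun)), !(Tmap_unit xi_vfun) in Hmul.
  unfold mu in Hmul. now rewrite (proj1 (counit_vhom (Fo X))), !counit_unit in Hmul.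
Qed.

Lemma alg_add_assoc (x y z : X) : alg_add x (alg_add y z) = alg_add (alg_add x y) z.
Proof.
  rewrite <- (xi_unit x), <- (xi_unit z). unfold alg_add at 2 4.
  now rewrite !alg_add_xi, !xi_unit, g_assoc.
Qed.

Lemma alg_zero_add (x : X) : alg_add alg_zero x = x.
Proof. rewrite <- (xi_unit x) at 1. unfold alg_zero. now rewrite alg_add_xi, g_zero_l, xi_unit. Qed.

Lemma alg_add_zero (x : X) : alg_add x alg_zero = x.
Proof. rewrite <- (xi_unit x) at 1. unfold alg_zero. now rewrite alg_add_xi, g_zero_r, xi_unit. Qed.

Lemma alg_neg_add (x : X) : alg_add (alg_neg x) x = alg_zero.
Proof. rewrite <- (xi_unit x) at 2. unfold alg_neg. now rewrite alg_add_xi, g_neg_l. Qed.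

Lemma alg_add_neg (x : X) : alg_add x (alg_neg x) = alg_zero.
Proof. rewrite <- (xi_unit x) at 1. unfold alg_neg. now rewrite alg_add_xi, g_neg_r. Qed.

Definition alg_grp : grp :=
  Grp alg_add_assoc alg_zero_add alg_add_zero alg_neg_add alg_add_neg.

Lemma alg_vgrp_str : is_vgrp_str (G := alg_grp) (@vc_hom V X).
Proof.
  split; [exact (vc_ax X)|]. intros x1 x2 y1 y2.
  eapply q_le_trans; [|apply xi_vfun].
  eapply q_le_trans; [|apply (proj2 (vg_ax (Fo X)))].
  apply q_ten_mono; apply unit_vfun.
Qed.

Definition alg_vgrp : vgrp V := VGrp alg_vgrp_str.

Lemma xi_vhom : vhom (A := Fo X) (B := alg_vgrp) xi.
Proof. split; [intros u v; symmetry; apply alg_add_xi | apply xi_vfun]. Qed.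

Lemma to_alg_vfun : vfun (X := X) (Y := U2 alg_vgrp) (fun x => x).
Proof. intros x x'. apply q_le_refl. Qed.

Lemma from_alg_vfun : vfun (X := U2 alg_vgrp) (Y := X) (fun x => x).
Proof. intros x x'. apply q_le_refl. Qed.

Lemma to_alg_morph :
  is_alg_morph eta ext (Y := U2 alg_vgrp) xi (counit ext (B := alg_vgrp)) (fun x => x).
Proof.
  split; [exact to_alg_vfun|].
  apply (vhom_eq_on_unit xi_vhom (vhom_comp (Tmap_vhom to_alg_vfun) (counit_vhom alg_vgrp))).
  intro x. now rewrite xi_unit, (Tmap_unit to_alg_vfun), counit_unit.
Qed.

Lemma from_alg_morph :
  is_alg_morph eta ext (X := U2 alg_vgrp) (counit ext (B := alg_vgrp)) xi (fun x => x).
Proof.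
  split; [exact from_alg_vfun|].
  apply (vhom_eq_on_unit (counit_vhom alg_vgrp) (vhom_comp (Tmap_vhom from_alg_vfun) xi_vhom)).
  intro x. now rewrite counit_unit, (Tmap_unit from_alg_vfun), xi_unit.
Qed.

End Algebra.

Lemma comparison_equivalence_of_left_adjoint : comparison_equivalence eta ext.
Proof.
  split.
  - exact comparison_full.
  - intros X xi xi_algebra. exists (alg_vgrp xi_algebra), (fun x => x), (fun x => x).
    split; [|split; [|split]].
    + exact (to_alg_morph xi_algebra).
    + exact (from_alg_morph xi_algebra).
    + reflexivity.
    + reflexivity.
Qed.

End Monadicity.

Theorem theorem4p1 (V : quantale) (HV : is_frame V) :
  U1_topological V /\ U2_monadic V.
Proof.
  split.
  - apply U1_is_topological.
  - exists (@free_vgrp V), (@free_vgrp_unit V), (@free_vgrp_ext V).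
    split; [|apply comparison_equivalence_of_left_adjoint];
      apply free_vgrp_left_adjoint.
Qed.
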